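(* Let $g\colon\mathbb X\to\mathbb Y$ be continuous and calm in direction $u\in\mathbb S_{\mathbb X}$ at $\bar x\in\mathbb X$, let $D\subset\mathbb Y$ be closed, let $\Phi(x):=g(x)-D$, and assume $(\bar x,0)\in\operatorname{gph}\Phi$. Let $\{e_1,\dots,e_m\}$ be an orthonormal basis of $\mathbb Y$. Suppose there do not exist a direction $v\in\mathbb Y$ and a nonzero $\lambda\in\mathcal N_D(g(\bar x);v)$ with $0\in D^*g(\bar x;(u,v))(\lambda)$ for which there are sequences $\{x_k\}\subset\mathbb X$ with $x_k\ne\bar x$, $\{z_k\}\subset D$, $\{\lambda_k\}\subset\mathbb Y$, $\{\eta_k\}\subset\mathbb X$ such that $x_k\to\bar x$, $z_k\to g(\bar x)$, $\lambda_k\to\lambda$, $\eta_k\to0$, $(x_k-\bar x)/\|x_k-\bar x\|\to u$, $(z_k-g(\bar x))/\|x_k-\bar x\|\to v$, $(g(x_k)-g(\bar x))/\|x_k-\bar x\|\to v$, and for all $k$ and $i\in\{1,\dots,m\}$: $\eta_k\in\widehat D^*g(x_k)(\lambda_k)$, $\lambda_k\in\widehat{\mathcal N}_D(z_k)$, and $\langle\lambda,e_i\rangle\langle g(x_k)-z_k,e_i\rangle>0$ whenever $\langle\lambda,e_i\rangle\ne0$. Then $\Phi$ is quasi-normal in direction $u$ at $(\bar x,0)$ w.r.t. $\{e_1,\dots,e_m\}$. Moreover, if $g$ is calm at every point of a neighbourhood of $\bar x$ (e.g. Lipschitz continuous near $\bar x$), the two conditions are equivalent.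
   Context: $\widehat{\mathcal N}_D$ regular normal cone; $\mathcal N_D(y;v)$ directional limiting normal cone (limits of $\eta_k\in\widehat{\mathcal N}_D(y+t_kv_k)$, $v_k\to v$, $t_k\searrow0$). Regular coderivative $\widehat D^*g(x)(y^* )=\{x^*\mid(x^*,-y^* )\in\widehat{\mathcal N}_{\operatorname{gph}g}(x,g(x))\}$; directional limiting coderivative $D^*g(\bar x;(u,v))(y^* )=\{x^*\mid(x^*,-y^* )\in\mathcal N_{\operatorname{gph}g}((\bar x,g(\bar x));(u,v))\}$; analogously for $\Phi$. $g$ is calm in direction $u$ at $\bar x$ if there are $\varepsilon,\delta,L>0$ with $\|g(x')-g(\bar x)\|\le L\|x'-\bar x\|$ for all $x'\in\bar x+\mathbb B_{\varepsilon,\delta}(u)$, $\mathbb B_{\varepsilon,\delta}(u)=\{v\mid\|\|v\|u-\|u\|v\|\le\delta\|u\|\|v\|,\ \|v\|\le\varepsilon\}$; calm at $x$ means $\|g(x')-g(x)\|\le L\|x'-x\|$ for $x'$ near $x$. Quasi-normality in direction $u$ at $(\bar x,\bar y)$ w.r.t. $\{e_i\}$: there is no nonzero $\lambda$ with $0\in D^*\Phi((\bar x,\bar y);(u,0))(\lambda)$ for which there exist $\{(x_k,y_k)\}\subset\operatorname{gph}\Phi$ with $x_k\ne\bar x$, $\{\lambda_k\}$, $\{\eta_k\}$ with $x_k\to\bar x$, $y_k\to\bar y$, $\lambda_k\to\lambda$, $\eta_k\to0$, $(x_k-\bar x)/\|x_k-\bar x\|\to u$, $(y_k-\bar y)/\|x_k-\bar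 x\|\to0$, $\eta_k\in\widehat D^*\Phi(x_k,y_k)(\lambda_k)$, and $\langle\lambda,e_i\rangle\langle y_k-\bar y,e_i\rangle>0$ whenever $\langle\lambda,e_i\rangle\ne0$. *)

(* X = R^n, Y = R^m as row vectors 'rV[R]_n with the
   standard (Euclidean) inner product, over R : realType. *)
From HB Require Import structures.
From mathcomp Require Import all_boot all_order all_algebra.
From mathcomp Require Import reals.
Set Implicit Arguments. Unset Strict Implicit. Unset Printing Implicit Defensive.
Import Order.TTheory GRing.Theory Num.Theory.
Local Open Scope ring_scope.

Section Defs.
Variable R : realType.

Definition dotv {p} (x y : 'rV[R]_p) : R := \sum_(i < p) x 0 i * y 0 i.
Definition enorm {p} (x : 'rV[R]_p) : R := Num.sqrt (dotv x x).

Definition vcvg {p} (s : nat -> 'rV[R]_p) (l : 'rV[R]_p) : Prop :=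
  forall eps : R, 0 < eps -> exists N : nat, forall k, (N <= k)%N -> enorm (s k - l) < eps.
Definition rcvg (s : nat -> R) (l : R) : Prop :=
  forall eps : R, 0 < eps -> exists N : nat, forall k, (N <= k)%N -> `|s k - l| < eps.

Definition vclosed {p} (D : 'rV[R]_p -> Prop) : Prop :=
  forall (s : nat -> 'rV[R]_p) l, (forall k, D (s k)) -> vcvg s l -> D l.
Definition vcontinuous {n m} (g : 'rV[R]_n -> 'rV[R]_m) : Prop :=
  forall x eps, 0 < eps -> exists2 delta, 0 < delta &
    forall x', enorm (x' - x) < delta -> enorm (g x' - g x) < eps.

(* regular (Frechet) normal cone: eta in N^_D(y) (empty if y notin D) *)
Definition rnormal {p} (D : 'rV[R]_p -> Prop) (y eta : 'rV[R]_p) : Prop :=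
  D y /\ forall eps, 0 < eps -> exists2 delta, 0 < delta &
    forall y', D y' -> enorm (y' - y) < delta -> dotv eta (y' - y) <= eps * enorm (y' - y).

(* directional limiting normal cone: eta in N_D(y; v) *)
Definition dnormal {p} (D : 'rV[R]_p -> Prop) (y v eta : 'rV[R]_p) : Prop :=
  exists (t : nat -> R) (vs etas : nat -> 'rV[R]_p),
    (forall k, 0 < t k) /\ rcvg t 0 /\ vcvg vs v /\ vcvg etas eta /\
    forall k, rnormal D (y + t k *: vs k) (etas k).

(* set-valued maps Phi : R^n => R^m, encoded by Phi x y <-> y \in Phi(x);
   the graph lives in R^(n+m) = R^n x R^m, (x,y) ~ row_mx x y *)
Definition gph {n m} (Phi : 'rV[R]_n -> 'rV[R]_m -> Prop) : 'rV[R]_(n + m) -> Prop :=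
  fun w => Phi (lsubmx w) (rsubmx w).

(* regular coderivative: xs in D^*Phi(x,y)(ys) *)
Definition rcoder {n m} (Phi : 'rV[R]_n -> 'rV[R]_m -> Prop) (x : 'rV[R]_n) (y : 'rV[R]_m)
  (ys : 'rV[R]_m) (xs : 'rV[R]_n) : Prop :=
  rnormal (gph Phi) (row_mx x y) (row_mx xs (- ys)).

(* directional limiting coderivative: xs in D^*Phi((x,y);(u,v))(ys) *)
Definition dcoder {n m} (Phi : 'rV[R]_n -> 'rV[R]_m -> Prop) (x : 'rV[R]_n) (y : 'rV[R]_m)
  (u : 'rV[R]_n) (v : 'rV[R]_m) (ys : 'rV[R]_m) (xs : 'rV[R]_n) : Prop :=
  dnormal (gph Phi) (row_mx x y) (row_mx u v) (row_mx xs (- ys)).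

Definition fmap {n m} (g : 'rV[R]_n -> 'rV[R]_m) : 'rV[R]_n -> 'rV[R]_m -> Prop :=
  fun x y => y = g x.

Definition dirball {n} (eps delta : R) (u : 'rV[R]_n) (v : 'rV[R]_n) : Prop :=
  enorm (enorm v *: u - enorm u *: v) <= delta * enorm u * enorm v /\ enorm v <= eps.

Definition calm_dir {n m} (g : 'rV[R]_n -> 'rV[R]_m) (xb u : 'rV[R]_n) : Prop :=
  exists eps delta L, [/\ 0 < eps, 0 < delta, 0 < L &
    forall x', dirball eps delta u (x' - xb) -> enorm (g x' - g xb) <= L * enorm (x' - xb)].

Definition calm_at {n m} (g : 'rV[R]_n -> 'rV[R]_m) (x : 'rV[R]_n) : Prop :=
  exists L r, [/\ 0 < L, 0 < r &
    forall x', enorm (x' - x) < r -> enorm (g x' - g x) <= L * enorm (x' - x)].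

Definition orthonormal_basis {m} (e : 'I_m -> 'rV[R]_m) : Prop :=
  forall i j, dotv (e i) (e j) = (i == j)%:R.

Definition quasi_normal_dir {n m} (Phi : 'rV[R]_n -> 'rV[R]_m -> Prop)
  (xb : 'rV[R]_n) (yb : 'rV[R]_m) (u : 'rV[R]_n) (e : 'I_m -> 'rV[R]_m) : Prop :=
  ~ exists lam : 'rV[R]_m, lam <> 0 /\ dcoder Phi xb yb u 0 lam 0 /\
    exists (xs : nat -> 'rV[R]_n) (ys : nat -> 'rV[R]_m)
           (lams : nat -> 'rV[R]_m) (etas : nat -> 'rV[R]_n),
      (forall k, Phi (xs k) (ys k)) /\ (forall k, xs k <> xb) /\
      vcvg xs xb /\ vcvg ys yb /\ vcvg lams lam /\ vcvg etas 0 /\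
      vcvg (fun k => (enorm (xs k - xb))^-1 *: (xs k - xb)) u /\
      vcvg (fun k => (enorm (xs k - xb))^-1 *: (ys k - yb)) 0 /\
      (forall k, rcoder Phi (xs k) (ys k) (lams k) (etas k)) /\
      (forall k i, dotv lam (e i) != 0 -> 0 < dotv lam (e i) * dotv (ys k - yb) (e i)).

Definition cond_gD {n m} (g : 'rV[R]_n -> 'rV[R]_m) (D : 'rV[R]_m -> Prop)
  (xb u : 'rV[R]_n) (e : 'I_m -> 'rV[R]_m) : Prop :=
  ~ exists (v lam : 'rV[R]_m), lam <> 0 /\ dnormal D (g xb) v lam /\
    dcoder (fmap g) xb (g xb) u v lam 0 /\
    exists (xs : nat -> 'rV[R]_n) (zs : nat -> 'rV[R]_m)
           (lams : nat -> 'rV[R]_m) (etas : nat -> 'rV[R]_n),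
      (forall k, xs k <> xb) /\ (forall k, D (zs k)) /\
      vcvg xs xb /\ vcvg zs (g xb) /\ vcvg lams lam /\ vcvg etas 0 /\
      vcvg (fun k => (enorm (xs k - xb))^-1 *: (xs k - xb)) u /\
      vcvg (fun k => (enorm (xs k - xb))^-1 *: (zs k - g xb)) v /\
      vcvg (fun k => (enorm (xs k - xb))^-1 *: (g (xs k) - g xb)) v /\
      (forall k, rcoder (fmap g) (xs k) (g (xs k)) (lams k) (etas k)) /\
      (forall k, rnormal D (zs k) (lams k)) /\
      (forall k i, dotv lam (e i) != 0 -> 0 < dotv lam (e i) * dotv (g (xs k) - zs k) (e i)).

Definition PhigD {n m} (g : 'rV[R]_n -> 'rV[R]_m) (D : 'rV[R]_m -> Prop)
  : 'rV[R]_n -> 'rV[R]_m -> Prop := fun x y => D (g x - y).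

End Defs.

(* Write y_k = g(x_k) - z_k to pass between the sequences of [quasi_normal_dir]
   for Phi(x) = g(x) - D and those of [cond_gD].  A regular normal (eta, -lam)
   to gph Phi at (x, g x - z) yields a regular normal lam to D at z and a
   regular normal (eta, -lam) to gph g at (x, g x); conversely the two combine
   into a regular normal to gph Phi as soon as g is calm at x, since calmness
   controls the distances to both pieces linearly.  For the first
   implication, directional calmness keeps the difference quotients of g along
   x_k bounded, so a subsequence produces the direction v demanded by
   [cond_gD].  In both directions the directional limiting normals and
   coderivatives are generated by the sequences themselves. *)
From mathcomp Require Import all_boot all_order all_algebra.
From mathcomp Require Import all_classical all_reals topology normedtype sequences.
From mathcomp Require Import ring lra.
Import Order.TTheory GRing.Theory Num.Theory numFieldNormedType.Exports.
Local Open Scope ring_scope.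
Set Implicit Arguments. Unset Strict Implicit. Unset Printing Implicit Defensive.

Section Euclid.
Variable R : realType.
Implicit Types p : nat.

Lemma dotvC p (x y : 'rV[R]_p) : dotv x y = dotv y x.
Proof. by apply: eq_bigr => i _; rewrite mulrC. Qed.

Lemma dotvDl p (x y z : 'rV[R]_p) : dotv (x + y) z = dotv x z + dotv y z.
Proof. by rewrite /dotv -big_split; apply: eq_bigr => i _; rewrite mxE mulrDl. Qed.

Lemma dotvZl p a (x z : 'rV[R]_p) : dotv (a *: x) z = a * dotv x z.
Proof. by rewrite /dotv mulr_sumr; apply: eq_bigr => i _; rewrite mxE mulrA. Qed.

Lemma dotvNl p (x z : 'rV[R]_p) : dotv (- x) z = - dotv x z.
Proof. by rewrite -scaleN1r dotvZl mulN1r. Qed.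

Lemma dotvBl p (x y z : 'rV[R]_p) : dotv (x - y) z = dotv x z - dotv y z.
Proof. by rewrite dotvDl dotvNl. Qed.

Lemma dotv0l p (z : 'rV[R]_p) : dotv 0 z = 0.
Proof. by rewrite -(scale0r 0) dotvZl mul0r. Qed.

Lemma dotvDr p (x y z : 'rV[R]_p) : dotv z (x + y) = dotv z x + dotv z y.
Proof. by rewrite dotvC dotvDl !(dotvC z). Qed.

Lemma dotvZr p a (x z : 'rV[R]_p) : dotv z (a *: x) = a * dotv z x.
Proof. by rewrite dotvC dotvZl dotvC. Qed.

Lemma dotvNr p (x z : 'rV[R]_p) : dotv z (- x) = - dotv z x.
Proof. by rewrite dotvC dotvNl dotvC. Qed.

Lemma dotvBr p (x y z : 'rV[R]_p) : dotv z (x - y) = dotv z x - dotv z y.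
Proof. by rewrite dotvDr dotvNr. Qed.

Lemma dotv0r p (z : 'rV[R]_p) : dotv z 0 = 0.
Proof. by rewrite dotvC dotv0l. Qed.

Lemma dotvv_ge0 p (x : 'rV[R]_p) : 0 <= dotv x x.
Proof. by apply: sumr_ge0 => i _; rewrite -expr2 sqr_ge0. Qed.

Lemma dotvv_eq0 p (x : 'rV[R]_p) : dotv x x = 0 -> x = 0.
Proof.
move=> /eqP; rewrite psumr_eq0 => [/allP x0|i _]; last by rewrite -expr2 sqr_ge0.
apply/matrixP => i j; rewrite mxE (ord1 i).
by have /implyP/(_ isT) := x0 j (mem_index_enum j); rewrite -expr2 sqrf_eq0 => /eqP.
Qed.

Lemma enorm_ge0 p (x : 'rV[R]_p) : 0 <= enorm x.
Proof. exact: sqrtr_ge0. Qed.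

Lemma enorm_sqr p (x : 'rV[R]_p) : enorm x ^+ 2 = dotv x x.
Proof. by rewrite sqr_sqrtr // dotvv_ge0. Qed.

Lemma enormZ p a (x : 'rV[R]_p) : enorm (a *: x) = `|a| * enorm x.
Proof. by rewrite /enorm dotvZl dotvZr mulrA -expr2 sqrtrM ?sqr_ge0 // sqrtr_sqr. Qed.

Lemma enormN p (x : 'rV[R]_p) : enorm (- x) = enorm x.
Proof. by rewrite -scaleN1r enormZ normrN1 mul1r. Qed.

Lemma enorm_subr_gt0 p (x y : 'rV[R]_p) : x <> y -> 0 < enorm (x - y).
Proof.
move=> xy; rewrite lt_def enorm_ge0 andbT sqrtr_eq0 -ltNge lt_def dotvv_ge0 andbT.
by apply/eqP => /dotvv_eq0/eqP; rewrite subr_eq0 => /eqP.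
Qed.

Lemma enorm_ltE p (x : 'rV[R]_p) e : 0 < e -> (enorm x < e) = (dotv x x < e ^+ 2).
Proof. by move=> ep; rewrite -enorm_sqr ltr_pXn2r // nnegrE ?enorm_ge0 // ltW. Qed.

Lemma dotv_le p (x y : 'rV[R]_p) : dotv x y <= enorm x * enorm y.
Proof.
apply: le_trans (ler_norm _) _.
rewrite -sqrtr_sqr /enorm -sqrtrM ?dotvv_ge0 // ler_wsqrtr //.
have [/dotvv_eq0 ->|y0] := eqVneq (dotv y y) 0; first by rewrite !dotv0r expr0n /= mulr0.
have yp : 0 < dotv y y by rewrite lt_def y0 dotvv_ge0.
(* [w := dotv y y *: x - dotv x y *: y] has [dotv w w] equal to [dotv y y] times the Cauchy-Schwarz gap *)
have : 0 <= dotv y y * (dotv y y * dotv x x - dotv x y ^+ 2).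
  suff -> : dotv y y * (dotv y y * dotv x x - dotv x y ^+ 2) =
      dotv (dotv y y *: x - dotv x y *: y) (dotv y y *: x - dotv x y *: y).
    exact: dotvv_ge0.
  by rewrite !(dotvBl, dotvBr, dotvZl, dotvZr) (dotvC y x); ring.
by rewrite pmulr_rge0 // subr_ge0 mulrC.
Qed.

Lemma enormD p (x y : 'rV[R]_p) : enorm (x + y) <= enorm x + enorm y.
Proof.
rewrite -(ler_pXn2r (_ : 0 < 2)%N) ?nnegrE ?addr_ge0 ?enorm_ge0 //.
rewrite enorm_sqr dotvDl !dotvDr (dotvC y x) sqrrD !enorm_sqr.
have := dotv_le x y; lra.
Qed.

Lemma normr_coord_le_enorm p (x : 'rV[R]_p) i : `|x 0 i| <= enorm x.
Proof.
rewrite -sqrtr_sqr /enorm ler_wsqrtr // /dotv (bigD1 i) //= -expr2 lerDl.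
by apply: sumr_ge0 => j _; rewrite -expr2 sqr_ge0.
Qed.

Lemma dotv_row_mx p q (a c : 'rV[R]_p) (b d : 'rV[R]_q) :
  dotv (row_mx a b) (row_mx c d) = dotv a c + dotv b d.
Proof.
by rewrite /dotv big_split_ord; congr (_ + _); apply: eq_bigr => i _;
  rewrite ?row_mxEl ?row_mxEr.
Qed.

Lemma enorm_row_mx_le p q (a : 'rV[R]_p) (b : 'rV[R]_q) :
  enorm (row_mx a b) <= enorm a + enorm b.
Proof.
have -> : row_mx a b = row_mx a 0 + row_mx 0 b by rewrite add_row_mx addr0 add0r.
apply: le_trans (enormD _ _) _.
by rewrite /enorm !dotv_row_mx !dotv0l addr0 add0r.
Qed.

Lemma enorm_lsubmx_le p q (w : 'rV[R]_(p + q)) : enorm (lsubmx w) <= enorm w.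
Proof.
by rewrite -{2}(hsubmxK w) /enorm ler_wsqrtr // dotv_row_mx lerDl dotvv_ge0.
Qed.

Lemma enorm_rsubmx_le p q (w : 'rV[R]_(p + q)) : enorm (rsubmx w) <= enorm w.
Proof.
by rewrite -{2}(hsubmxK w) /enorm ler_wsqrtr // dotv_row_mx lerDr dotvv_ge0.
Qed.

Lemma enorm_row_mx0l p q (b : 'rV[R]_q) : enorm (row_mx (0 : 'rV[R]_p) b) = enorm b.
Proof. by rewrite /enorm dotv_row_mx dotv0l add0r. Qed.

Lemma row_mxBr p q (x : 'rV[R]_p) (a b : 'rV[R]_q) :
  row_mx x a - row_mx x b = row_mx 0 (a - b).
Proof. by rewrite opp_row_mx add_row_mx subrr. Qed.

End Euclid.

Section Convergence.
Variable R : realType.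
Implicit Types p : nat.

Lemma eq_vcvg p (s t : nat -> 'rV[R]_p) l :
  vcvg s l -> (forall k, s k = t k) -> vcvg t l.
Proof. by move=> H E e ep; have [N HN] := H e ep; exists N => k /HN; rewrite E. Qed.

Lemma vcvgD p (s t : nat -> 'rV[R]_p) a b :
  vcvg s a -> vcvg t b -> vcvg (fun k => s k + t k) (a + b).
Proof.
move=> Hs Ht e ep.
have e2 : 0 < e / 2 by rewrite divr_gt0.
have [N1 H1] := Hs _ e2; have [N2 H2] := Ht _ e2.
exists (maxn N1 N2) => k; rewrite geq_max => /andP [k1 k2].
rewrite opprD addrACA; apply: le_lt_trans (enormD _ _) _.
by have := H1 _ k1; have := H2 _ k2; lra.
Qed.

Lemma vcvgN p (s : nat -> 'rV[R]_p) a : vcvg s a -> vcvg (fun k => - s k) (- a).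
Proof. by move=> H e ep; have [N HN] := H e ep; exists N => k /HN; rewrite -opprD enormN. Qed.

Lemma vcvgB p (s t : nat -> 'rV[R]_p) a b :
  vcvg s a -> vcvg t b -> vcvg (fun k => s k - t k) (a - b).
Proof. by move=> Hs /vcvgN; apply: vcvgD. Qed.

Lemma vcvg_row_mx p q (s : nat -> 'rV[R]_p) (t : nat -> 'rV[R]_q) a b :
  vcvg s a -> vcvg t b -> vcvg (fun k => row_mx (s k) (t k)) (row_mx a b).
Proof.
move=> Hs Ht e ep.
have e2 : 0 < e / 2 by rewrite divr_gt0.
have [N1 H1] := Hs _ e2; have [N2 H2] := Ht _ e2.
exists (maxn N1 N2) => k; rewrite geq_max => /andP [k1 k2].
rewrite opp_row_mx add_row_mx; apply: le_lt_trans (enorm_row_mx_le _ _) _.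
by have := H1 _ k1; have := H2 _ k2; lra.
Qed.

(* Extractions are only required to satisfy [k <= f k]: this suffices to
   preserve limits and is closed under composition. *)
Lemma vcvg_sub p (s : nat -> 'rV[R]_p) l (f : nat -> nat) :
  (forall k, (k <= f k)%N) -> vcvg s l -> vcvg (fun k => s (f k)) l.
Proof.
by move=> Hf H e ep; have [N HN] := H e ep; exists N => k Nk; apply/HN/(leq_trans Nk).
Qed.

Lemma rcvg_sub (s : nat -> R) l (f : nat -> nat) :
  (forall k, (k <= f k)%N) -> rcvg s l -> rcvg (fun k => s (f k)) l.
Proof.
by move=> Hf H e ep; have [N HN] := H e ep; exists N => k Nk; apply/HN/(leq_trans Nk).
Qed.

Lemma vcontinuous_vcvg p q (g : 'rV[R]_p -> 'rV[R]_q) xs x :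
  vcontinuous g -> vcvg xs x -> vcvg (fun k => g (xs k)) (g x).
Proof.
move=> Hg H e ep; have [d dp Hd] := Hg x e ep.
by have [N HN] := H d dp; exists N => k /HN /Hd.
Qed.

Lemma rcvg_enorm p (s : nat -> 'rV[R]_p) l :
  vcvg s l -> rcvg (fun k => enorm (s k - l)) 0.
Proof.
move=> H e ep; have [N HN] := H e ep; exists N => k /HN.
by rewrite subr0 ger0_norm ?enorm_ge0.
Qed.

Lemma vcvg_coord p (s : nat -> 'rV[R]_p) (l : 'rV[R]_p) :
  (forall i, rcvg (fun k => s k 0 i) (l 0 i)) -> vcvg s l.
Proof.
move=> Hs eps epsp.
have p1 : 0 < p%:R + 1 :> R by rewrite ltr_wpDl.
pose e := eps / (p%:R + 1).
have ep : 0 < e by rewrite divr_gt0.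
have [N HN] := fin_all_exists (fun i => Hs i e ep).
exists (\max_i N i) => k kN; rewrite enorm_ltE //.
have Hk i : (s k - l) 0 i * (s k - l) 0 i <= e ^+ 2.
  have := HN i k (leq_trans (leq_bigmax i) kN); rewrite !mxE => /ltW ha.
  by rewrite -expr2 -[X in X <= _]real_normK ?num_real // !expr2 ler_pM.
apply: le_lt_trans (ler_sum _ (fun i _ => Hk i)) _.
rewrite sumr_const card_ord -mulr_natl.
have -> : p%:R * e ^+ 2 = eps ^+ 2 * (p%:R / (p%:R + 1) ^+ 2).
  by rewrite /e; field; rewrite gt_eqF.
rewrite gtr_pMr ?exprn_gt0 // ltr_pdivrMr ?exprn_gt0 // mul1r.
have p0 : 0 <= p%:R :> R by [].
nra.
Qed.

Lemma bounded_extract_rcvg (s : nat -> R) (M : R) :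
  (forall k, `|s k| <= M) ->
  exists (f : nat -> nat) (l : R), (forall k, (k <= f k)%N) /\ rcvg (fun k => s (f k)) l.
Proof.
move=> HM.
have [|f f_incr /cvg_ex [/= l fl]] := @bolzano_weierstrass R s.
  rewrite /bounded_near; near=> M0 => k _ /=.
  by apply: le_trans (HM k) _; near: M0; apply: nbhs_pinfty_ge; exact: num_real.
exists f, l; split.
  elim=> // k IH; apply: leq_ltn_trans IH _.
  exact: (increasing_seqP f).2 f_incr k.
move=> eps epsp.
have /cvgrPdist_lt/(_ eps epsp) [N _ HN] := fl.
by exists N => k Nk; rewrite distrC; exact: HN.
Unshelve. all: end_near. Qed.

Lemma bounded_extract_vcvg p (s : nat -> 'rV[R]_p) (M : R) :
  (forall k, enorm (s k) <= M) ->
  exists (f : nat -> nat) (l : 'rV[R]_p),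
    (forall k, (k <= f k)%N) /\ vcvg (fun k => s (f k)) l.
Proof.
move=> HM.
suff /(_ p (leqnn p)) [f [l [Hf Hl]]] : forall j, (j <= p)%N ->
    exists (f : nat -> nat) (l : 'rV[R]_p), (forall k, (k <= f k)%N) /\
    forall i : 'I_p, (i < j)%N -> rcvg (fun k => s (f k) 0 i) (l 0 i).
  by exists f, l; split => //; apply: vcvg_coord => i; exact: Hl.
elim=> [_|j IH jp]; first by exists id, 0; split => // i; rewrite ltn0.
have [f [l [Hf Hl]]] := IH (ltnW jp).
pose i0 : 'I_p := Ordinal jp.
have [f' [l0 [Hf' Hl0]]] := bounded_extract_rcvg
  (fun k => le_trans (normr_coord_le_enorm (s (f k)) i0) (HM (f k))).
exists (f \o f'), (\row_i (if i == i0 then l0 else l 0 i)); split.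
  by move=> k; exact: leq_trans (Hf' k) (Hf _).
move=> i ij; rewrite mxE; case: eqP => [->|ne]; first exact: Hl0.
apply: (rcvg_sub Hf' (Hl i _)); rewrite ltn_neqAle -ltnS ij andbT.
by apply/eqP => ij0; apply: ne; exact: val_inj.
Qed.

End Convergence.

Section Normals.
Variable R : realType.

Lemma dnormal_of_seq p (D : 'rV[R]_p -> Prop) (y v eta : 'rV[R]_p)
    (t : nat -> R) (ys etas : nat -> 'rV[R]_p) :
  (forall k, 0 < t k) -> rcvg t 0 -> vcvg (fun k => (t k)^-1 *: (ys k - y)) v ->
  vcvg etas eta -> (forall k, rnormal D (ys k) (etas k)) -> dnormal D y v eta.
Proof.
move=> tp t0 Hv Heta Hn; exists t, (fun k => (t k)^-1 *: (ys k - y)), etas.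
do 4!split=> //; move=> k.
by rewrite scalerA mulfV ?gt_eqF // scale1r addrC subrK.
Qed.

Lemma dcoder_of_seq n m (Phi : 'rV[R]_n -> 'rV[R]_m -> Prop) (x u : 'rV[R]_n)
    (y v lam : 'rV[R]_m) (t : nat -> R) (xs etas : nat -> 'rV[R]_n)
    (ys lams : nat -> 'rV[R]_m) :
  (forall k, 0 < t k) -> rcvg t 0 ->
  vcvg (fun k => (t k)^-1 *: (xs k - x)) u -> vcvg (fun k => (t k)^-1 *: (ys k - y)) v ->
  vcvg lams lam -> vcvg etas 0 ->
  (forall k, rcoder Phi (xs k) (ys k) (lams k) (etas k)) -> dcoder Phi x y u v lam 0.
Proof.
move=> tp t0 Hu Hv Hl He Hco.
apply: (dnormal_of_seq (ys := fun k => row_mx (xs k) (ys k)) tp t0 _ _ Hco).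
  apply: eq_vcvg (vcvg_row_mx Hu Hv) _ => k.
  by rewrite opp_row_mx add_row_mx scale_row_mx.
exact: vcvg_row_mx He (vcvgN Hl).
Qed.

Lemma rnormal_pullback p q (D : 'rV[R]_p -> Prop) (S : 'rV[R]_q -> Prop)
    (f : 'rV[R]_q -> 'rV[R]_p) (y eta : 'rV[R]_p) (w : 'rV[R]_q) (K r : R) :
  rnormal D y eta -> 0 < K -> 0 < r ->
  (forall w', S w' -> enorm (w' - w) < r ->
     D (f w') /\ enorm (f w' - y) <= K * enorm (w' - w)) ->
  forall eps, 0 < eps -> exists2 delta, 0 < delta &
    forall w', S w' -> enorm (w' - w) < delta ->
      dotv eta (f w' - y) <= eps * enorm (w' - w).
Proof.
move=> [_ Hn] Kp rp Hf eps epsp.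
have [d dp Hd] := Hn (eps / K) (divr_gt0 epsp Kp).
exists (Num.min r (d / K)); first by rewrite lt_min rp divr_gt0.
move=> w' Sw'; rewrite lt_min => /andP [wr wd].
have [Dfw fwK] := Hf w' Sw' wr.
have fwd : enorm (f w' - y) < d.
  by apply: le_lt_trans fwK _; rewrite mulrC -ltr_pdivlMr.
apply: le_trans (Hd _ Dfw fwd) _.
apply: le_trans (ler_wpM2l _ fwK) _; first by rewrite ltW ?divr_gt0.
by rewrite mulrA divfK ?gt_eqF.
Qed.

Lemma rnormal_PhigD_D n m (g : 'rV[R]_n -> 'rV[R]_m) D (x eta : 'rV[R]_n) (y lam : 'rV[R]_m) :
  rnormal (gph (PhigD g D)) (row_mx x y) (row_mx eta (- lam)) -> rnormal D (g x - y) lam.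
Proof.
move=> Hn; split; first by case: Hn; rewrite /gph row_mxKl row_mxKr.
have E d : row_mx x (g x - d) - row_mx x y = - row_mx 0 (d - (g x - y)).
  by rewrite row_mxBr opp_row_mx oppr0 opprB addrAC.
have Hf d : D d -> enorm (d - (g x - y)) < 1 ->
    gph (PhigD g D) (row_mx x (g x - d)) /\
    enorm (row_mx x (g x - d) - row_mx x y) <= 1 * enorm (d - (g x - y)).
  by rewrite /gph row_mxKl row_mxKr /PhigD subKr E enormN enorm_row_mx0l mul1r.
move=> eps /(rnormal_pullback Hn ltr01 ltr01 Hf) [delta dp Hd].
exists delta => // d Dd dd; move: (Hd d Dd dd).
by rewrite E dotvNr dotv_row_mx dotv0r add0r dotvNl opprK.
Qed.

Lemma rnormal_PhigD_fmap n m (g : 'rV[R]_n -> 'rV[R]_m) D (x eta : 'rV[R]_n) (y lam : 'rV[R]_m) :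
  rnormal (gph (PhigD g D)) (row_mx x y) (row_mx eta (- lam)) ->
  rnormal (gph (fmap g)) (row_mx x (g x)) (row_mx eta (- lam)).
Proof.
move=> Hn; split; first by rewrite /gph row_mxKl row_mxKr.
pose f (w' : 'rV[R]_(n + m)) := row_mx (lsubmx w') (g (lsubmx w') - (g x - y)).
have E w' : gph (fmap g) w' -> f w' - row_mx x y = w' - row_mx x (g x).
  rewrite /gph /fmap /f => gw'; rewrite -{3}(hsubmxK w') gw' !opp_row_mx !add_row_mx.
  by rewrite opprB addrA addrAC addrK.
have Hf w' : gph (fmap g) w' -> enorm (w' - row_mx x (g x)) < 1 ->
    gph (PhigD g D) (f w') /\ enorm (f w' - row_mx x y) <= 1 * enorm (w' - row_mx x (g x)).
  move=> gw' _; rewrite E // mul1r; split => //.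
  by rewrite /gph /f row_mxKl row_mxKr /PhigD subKr; case: Hn; rewrite /gph row_mxKl row_mxKr.
move=> eps /(rnormal_pullback Hn ltr01 ltr01 Hf) [delta dp Hd].
by exists delta => // w' gw' dw'; have := Hd w' gw' dw'; rewrite E.
Qed.

Lemma rnormal_PhigD_of_calm n m (g : 'rV[R]_n -> 'rV[R]_m) D (x eta : 'rV[R]_n)
    (z lam : 'rV[R]_m) :
  calm_at g x -> rnormal D z lam ->
  rnormal (gph (fmap g)) (row_mx x (g x)) (row_mx eta (- lam)) ->
  rnormal (gph (PhigD g D)) (row_mx x (g x - z)) (row_mx eta (- lam)).
Proof.
move=> [L [r [Lp rp Hc]]] HD Hg.
split; first by rewrite /gph row_mxKl row_mxKr /PhigD subKr; case: HD.
pose w := row_mx x (g x - z).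
have Ew w' : w' - w = row_mx (lsubmx w' - x) (rsubmx w' - (g x - z)).
  by rewrite -{1}(hsubmxK w') opp_row_mx add_row_mx.
have dx w' : enorm (lsubmx w' - x) <= enorm (w' - w).
  by have := enorm_lsubmx_le (w' - w); rewrite Ew row_mxKl.
have dy w' : enorm (rsubmx w' - (g x - z)) <= enorm (w' - w).
  by have := enorm_rsubmx_le (w' - w); rewrite Ew row_mxKr.
have dg w' : enorm (w' - w) < r -> enorm (g (lsubmx w') - g x) <= L * enorm (w' - w).
  move=> wr; apply: le_trans (Hc _ (le_lt_trans (dx w') wr)) _.
  by rewrite ler_wpM2l ?(ltW Lp) ?dx.
have K0 : 0 < 1 + L by rewrite addr_gt0.
have Hg' w' : gph (PhigD g D) w' -> enorm (w' - w) < r ->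
    gph (fmap g) (row_mx (lsubmx w') (g (lsubmx w'))) /\
    enorm (row_mx (lsubmx w') (g (lsubmx w')) - row_mx x (g x)) <= (1 + L) * enorm (w' - w).
  move=> _ wr; split; first by rewrite /gph /fmap row_mxKl row_mxKr.
  rewrite opp_row_mx add_row_mx; apply: le_trans (enorm_row_mx_le _ _) _.
  by rewrite mulrDl mul1r lerD // dg.
have HD' w' : gph (PhigD g D) w' -> enorm (w' - w) < r ->
    D (g (lsubmx w') - rsubmx w') /\
    enorm (g (lsubmx w') - rsubmx w' - z) <= (1 + L) * enorm (w' - w).
  move=> Dw' wr; split => //.
  have -> : g (lsubmx w') - rsubmx w' - z =
      (g (lsubmx w') - g x) - (rsubmx w' - (g x - z)).
    by rewrite opprB addrA subrKA addrAC.
  by apply: le_trans (enormD _ _) _; rewrite enormN mulrDl mul1r addrC lerD // dg.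
move=> eps epsp.
have e2 : 0 < eps / 2 by rewrite divr_gt0.
have [d1 d1p H1] := rnormal_pullback Hg K0 rp Hg' e2.
have [d2 d2p H2] := rnormal_pullback HD K0 rp HD' e2.
exists (Num.min d1 d2); first by rewrite lt_min d1p.
move=> w' Dw'; rewrite lt_min => /andP [w1 w2].
(* split the test direction along the graph of g and along D *)
have -> : dotv (row_mx eta (- lam)) (w' - w) =
    dotv (row_mx eta (- lam)) (row_mx (lsubmx w') (g (lsubmx w')) - row_mx x (g x)) +
    dotv lam (g (lsubmx w') - rsubmx w' - z).
  by rewrite Ew opp_row_mx add_row_mx !dotv_row_mx !(dotvNl, dotvNr, dotvDr); ring.
by have := H1 w' Dw' w1; have := H2 w' Dw' w2; lra.
Qed.

End Normals.

Section Sequences.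
Variable R : realType.
Variables (n m : nat) (xb u : 'rV[R]_n) (e : 'I_m -> 'rV[R]_m).

Definition qn_seq (Phi : 'rV[R]_n -> 'rV[R]_m -> Prop) (yb lam : 'rV[R]_m)
    (xs : nat -> 'rV[R]_n) (ys lams : nat -> 'rV[R]_m) (etas : nat -> 'rV[R]_n) : Prop :=
  (forall k, Phi (xs k) (ys k)) /\ (forall k, xs k <> xb) /\
  vcvg xs xb /\ vcvg ys yb /\ vcvg lams lam /\ vcvg etas 0 /\
  vcvg (fun k => (enorm (xs k - xb))^-1 *: (xs k - xb)) u /\
  vcvg (fun k => (enorm (xs k - xb))^-1 *: (ys k - yb)) 0 /\
  (forall k, rcoder Phi (xs k) (ys k) (lams k) (etas k)) /\
  (forall k i, dotv lam (e i) != 0 -> 0 < dotv lam (e i) * dotv (ys k - yb) (e i)).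

Definition cond_seq (g : 'rV[R]_n -> 'rV[R]_m) (D : 'rV[R]_m -> Prop) (v lam : 'rV[R]_m)
    (xs : nat -> 'rV[R]_n) (zs lams : nat -> 'rV[R]_m) (etas : nat -> 'rV[R]_n) : Prop :=
  (forall k, xs k <> xb) /\ (forall k, D (zs k)) /\
  vcvg xs xb /\ vcvg zs (g xb) /\ vcvg lams lam /\ vcvg etas 0 /\
  vcvg (fun k => (enorm (xs k - xb))^-1 *: (xs k - xb)) u /\
  vcvg (fun k => (enorm (xs k - xb))^-1 *: (zs k - g xb)) v /\
  vcvg (fun k => (enorm (xs k - xb))^-1 *: (g (xs k) - g xb)) v /\
  (forall k, rcoder (fmap g) (xs k) (g (xs k)) (lams k) (etas k)) /\
  (forall k, rnormal D (zs k) (lams k)) /\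
  (forall k i, dotv lam (e i) != 0 -> 0 < dotv lam (e i) * dotv (g (xs k) - zs k) (e i)).

Variables (g : 'rV[R]_n -> 'rV[R]_m) (D : 'rV[R]_m -> Prop).

Lemma qn_seq_sub Phi yb lam xs ys lams etas (f : nat -> nat) :
  (forall k, (k <= f k)%N) -> qn_seq Phi yb lam xs ys lams etas ->
  qn_seq Phi yb lam (xs \o f) (ys \o f) (lams \o f) (etas \o f).
Proof.
move=> Hf [HPhi [Hne [Hx [Hy [Hl [He [Hu [Hv [Hco Hsg]]]]]]]]].
split; first by move=> k; exact: HPhi.
split; first by move=> k; exact: Hne.
split; first exact: vcvg_sub Hf Hx.
split; first exact: vcvg_sub Hf Hy.
split; first exact: vcvg_sub Hf Hl.
split; first exact: vcvg_sub Hf He.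
split; first exact: vcvg_sub Hf Hu.
split; first exact: vcvg_sub Hf Hv.
by split=> [k|k i]; [exact: Hco | exact: Hsg].
Qed.

Lemma cond_seq_sub v lam xs zs lams etas (f : nat -> nat) :
  (forall k, (k <= f k)%N) -> cond_seq g D v lam xs zs lams etas ->
  cond_seq g D v lam (xs \o f) (zs \o f) (lams \o f) (etas \o f).
Proof.
move=> Hf [Hne [HD [Hx [Hz [Hl [He [Hu [Hzv [Hgv [Hco [Hn Hsg]]]]]]]]]]].
split; first by move=> k; exact: Hne.
split; first by move=> k; exact: HD.
split; first exact: vcvg_sub Hf Hx.
split; first exact: vcvg_sub Hf Hz.
split; first exact: vcvg_sub Hf Hl.
split; first exact: vcvg_sub Hf He.
split; first exact: vcvg_sub Hf Hu.
split; first exact: vcvg_sub Hf Hzv.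
split; first exact: vcvg_sub Hf Hgv.
by split=> [k|]; [exact: Hco | split=> [k|k i]; [exact: Hn | exact: Hsg]].
Qed.

Lemma qn_seq_dcoder Phi yb lam xs ys lams etas :
  qn_seq Phi yb lam xs ys lams etas -> dcoder Phi xb yb u 0 lam 0.
Proof.
move=> [_ [Hne [Hx [_ [Hl [He [Hu [Hv [Hco _]]]]]]]]].
exact: dcoder_of_seq (fun k => enorm_subr_gt0 (Hne k)) (rcvg_enorm Hx) Hu Hv Hl He Hco.
Qed.

Lemma cond_seq_dnormal v lam xs zs lams etas :
  cond_seq g D v lam xs zs lams etas -> dnormal D (g xb) v lam.
Proof.
move=> [Hne [_ [Hx [_ [Hl [_ [_ [Hzv [_ [_ [Hn _]]]]]]]]]]].
exact: dnormal_of_seq (fun k => enorm_subr_gt0 (Hne k)) (rcvg_enorm Hx) Hzv Hl Hn.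
Qed.

Lemma cond_seq_dcoder v lam xs zs lams etas :
  cond_seq g D v lam xs zs lams etas -> dcoder (fmap g) xb (g xb) u v lam 0.
Proof.
move=> [Hne [_ [Hx [_ [Hl [He [Hu [_ [Hgv [Hco _]]]]]]]]]].
exact: dcoder_of_seq (fun k => enorm_subr_gt0 (Hne k)) (rcvg_enorm Hx) Hu Hgv Hl He Hco.
Qed.

Hypothesis g_cont : vcontinuous g.

Lemma cond_seq_of_qn_seq (v lam : 'rV[R]_m) xs ys lams etas :
  qn_seq (PhigD g D) 0 lam xs ys lams etas ->
  vcvg (fun k => (enorm (xs k - xb))^-1 *: (g (xs k) - g xb)) v ->
  cond_seq g D v lam xs (fun k => g (xs k) - ys k) lams etas.
Proof.
move=> [HPhi [Hne [Hx [Hy [Hl [He [Hu [Hv0 [Hco Hsg]]]]]]]]] Hgv.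
split; first exact: Hne.
split; first exact: HPhi.
split; first exact: Hx.
split; first by rewrite -[g xb]subr0; exact: vcvgB (vcontinuous_vcvg g_cont Hx) Hy.
split; first exact: Hl.
split; first exact: He.
split; first exact: Hu.
split.
  rewrite -[v]subr0; apply: eq_vcvg (vcvgB Hgv Hv0) _ => k.
  by rewrite -scalerBr subr0 addrAC.
split; first exact: Hgv.
split=> [k|]; first exact: rnormal_PhigD_fmap (Hco k).
split=> [k|k i]; first exact: rnormal_PhigD_D (Hco k).
by rewrite subKr -[ys k]subr0; exact: Hsg.
Qed.

Lemma qn_seq_of_cond_seq (v lam : 'rV[R]_m) xs zs lams etas :
  (forall k, calm_at g (xs k)) -> cond_seq g D v lam xs zs lams etas ->
  qn_seq (PhigD g D) 0 lam xs (fun k => g (xs k) - zs k) lams etas.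
Proof.
move=> Hcalm [Hne [HD [Hx [Hz [Hl [He [Hu [Hzv [Hgv [Hco [Hn Hsg]]]]]]]]]]].
split; first by move=> k; rewrite /PhigD subKr.
split; first exact: Hne.
split; first exact: Hx.
split; first by rewrite -(subrr (g xb)); exact: vcvgB (vcontinuous_vcvg g_cont Hx) Hz.
split; first exact: Hl.
split; first exact: He.
split; first exact: Hu.
split.
  rewrite -[X in vcvg _ X](subrr v); apply: eq_vcvg (vcvgB Hgv Hzv) _ => k.
  by rewrite -scalerBr subr0 opprB subrKA.
split=> [k|k i]; first exact: rnormal_PhigD_of_calm (Hcalm k) (Hn k) (Hco k).
by rewrite subr0; exact: Hsg.
Qed.

End Sequences.

Lemma calm_dir_diffq_bounded (R : realType) n m (g : 'rV[R]_n -> 'rV[R]_m)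
    (xb u : 'rV[R]_n) (xs : nat -> 'rV[R]_n) :
  calm_dir g xb u -> enorm u = 1 -> vcvg xs xb -> (forall k, xs k <> xb) ->
  vcvg (fun k => (enorm (xs k - xb))^-1 *: (xs k - xb)) u ->
  exists (L : R) (N : nat), forall k, (N <= k)%N ->
    enorm ((enorm (xs k - xb))^-1 *: (g (xs k) - g xb)) <= L.
Proof.
move=> [eps [delta [L [epsp deltap Lp Hcalm]]]] nu Hx Hne Hu.
have [N1 H1] := Hu delta deltap; have [N2 H2] := Hx eps epsp.
exists L, (maxn N1 N2) => k; rewrite geq_max => /andP [k1 k2].
have tp := enorm_subr_gt0 (Hne k); set t := enorm (xs k - xb) in tp *.
have Hdir : dirball eps delta u (xs k - xb).
  split; last exact: ltW (H2 k k2).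
  rewrite nu mulr1 scale1r -/t.
  have -> : t *: u - (xs k - xb) = - (t *: (t^-1 *: (xs k - xb) - u)).
    by rewrite scalerBr scalerA mulfV ?gt_eqF // scale1r [RHS]opprB.
  rewrite enormN enormZ gtr0_norm // [leRHS]mulrC ler_pM2l //.
  exact: ltW (H1 k k1).
rewrite enormZ ger0_norm ?invr_ge0 ?(ltW tp) // ler_pdivrMl // mulrC.
exact: Hcalm.
Qed.

Lemma cond_gD_quasi_normal_dir (R : realType) n m (g : 'rV[R]_n -> 'rV[R]_m) D
    (xb u : 'rV[R]_n) (e : 'I_m -> 'rV[R]_m) :
  vcontinuous g -> enorm u = 1 -> calm_dir g xb u ->
  cond_gD g D xb u e -> quasi_normal_dir (PhigD g D) xb 0 u e.
Proof.
move=> g_cont nu calm C [lam [lam0 [_ [xs [ys [lams [etas Hq]]]]]]].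
have [_ [Hne [Hx [_ [_ [_ [Hu _]]]]]]] := Hq.
have [L [N HL]] := calm_dir_diffq_bounded calm nu Hx Hne Hu.
have [f [v [Hf Hv]]] := bounded_extract_vcvg (fun k => HL (k + N)%N (leq_addl _ _)).
pose sg k := (f k + N)%N.
have Hsg k : (k <= sg k)%N := leq_trans (Hf k) (leq_addr _ _).
have Hc := cond_seq_of_qn_seq g_cont (qn_seq_sub Hsg Hq) Hv.
apply: C; exists v, lam; split => //.
split; first exact: cond_seq_dnormal Hc.
split; first exact: cond_seq_dcoder Hc.
by exists (xs \o sg), (fun k => g (xs (sg k)) - ys (sg k)), (lams \o sg), (etas \o sg).
Qed.

Lemma quasi_normal_dir_cond_gD (R : realType) n m (g : 'rV[R]_n -> 'rV[R]_m) D
    (xb u : 'rV[R]_n) (e : 'I_m -> 'rV[R]_m) (r : R) :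
  vcontinuous g -> 0 < r -> (forall x, enorm (x - xb) < r -> calm_at g x) ->
  quasi_normal_dir (PhigD g D) xb 0 u e -> cond_gD g D xb u e.
Proof.
move=> g_cont rp Hr Q [v [lam [lam0 [_ [_ [xs [zs [lams [etas Hc]]]]]]]]].
have [_ [_ [Hx _]]] := Hc.
have [N HN] := Hx r rp.
pose sg k := (k + N)%N.
have Hsg k : (k <= sg k)%N := leq_addr N k.
have Hq := qn_seq_of_cond_seq g_cont (fun k => Hr _ (HN _ (leq_addl _ _))) (cond_seq_sub Hsg Hc).
apply: Q; exists lam; split => //; split; first exact: qn_seq_dcoder Hq.
by exists (xs \o sg), (fun k => g (xs (sg k)) - zs (sg k)), (lams \o sg), (etas \o sg).
Qed.

Theorem mainTheorem5 (R : realType) (n m : nat)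
  (g : 'rV[R]_n -> 'rV[R]_m) (D : 'rV[R]_m -> Prop)
  (xb u : 'rV[R]_n) (e : 'I_m -> 'rV[R]_m) :
  vcontinuous g -> enorm u = 1 -> calm_dir g xb u ->
  vclosed D -> PhigD g D xb 0 -> orthonormal_basis e ->
  (cond_gD g D xb u e -> quasi_normal_dir (PhigD g D) xb 0 u e) /\
  ((exists2 r : R, 0 < r & forall x, enorm (x - xb) < r -> calm_at g x) ->
     (cond_gD g D xb u e <-> quasi_normal_dir (PhigD g D) xb 0 u e)).
Proof.
move=> g_cont nu calm _ _ _.
have suff_cond := @cond_gD_quasi_normal_dir R n m g D xb u e g_cont nu calm.
split => // -[r rp Hr]; split => //.
exact: quasi_normal_dir_cond_gD g_cont rp Hr.
Qed.
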